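(* Let $V$ be a Poisson algebra over $\Bbbk$ with commutative associative product $xy$ and Poisson bracket $[x,y]$, and let $D:V\to V$ be a derivation of $V$ (a linear map that is a derivation of both the product and the bracket). On the free $H$-module $P=H\otimes V$ define $\lambda$-products on $V$ by $$(x_\lambda y)=xy,\qquad [x_\lambda y]=[x,y]+\partial\big(yD(x)\big)+\lambda D(xy),\qquad x,y\in V,$$ extended to all of $P$ by sesquilinearity. Then $P$ is a Poisson conformal algebra.
   Context: $\Bbbk$ is a field of characteristic $0$, $H=\Bbbk[\partial]$. A $\lambda$-product on an $H$-module $C$ is a $\Bbbk$-bilinear map $(x,y)\mapsto(x_\lambda y)=\sum_{n\ge0}\frac{\lambda^n}{n!}(x_{(n)}y)\in C[\lambda]$ satisfying sesquilinearity $(\partial x_\lambda y)=-\lambda(x_\lambda y)$, $(x_\lambda\partial y)=(\partial+\lambda)(x_\lambda y)$; $(x_{-\partial-\lambda}y)$ means $\sum_n\frac{(-\partial-\lambda)^n}{n!}(x_{(n)}y)$ with $\partial$ acting on coefficients. A Poisson conformal algebra is an $H$-module $P$ with two $\lambda$-products $(x_\lambda y)$ and $[x_\lambda y]$ such that: $(\cdot_\lambda\cdot)$ is associative, $(x_\lambda(y_\mu z))=((x_\lambda y)_{\lambda+\mu}z)$, and commutative, $(x_\lambda y)=(y_{-\partial-\lambda}x)$; $[\cdot_\lambda\cdot]$ is skew-symmetric, $[x_\lambda y]=-[y_{-\partial-\lambda}x]$, and satisfies the Jacobi identity $[x_\lambda[y_\mu z]]-[y_\mu[x_\lambda z]]=[[x_\lambda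 y]_{\lambda+\mu}z]$; and the conformal Leibniz rule $[x_\lambda(y_\mu z)]=([x_\lambda y]_{\lambda+\mu}z)+(y_\mu[x_\lambda z])$ holds for all $x,y,z\in P$. *)

From HB Require Import structures.
From mathcomp Require Import all_boot all_order all_algebra.
Set Implicit Arguments. Unset Strict Implicit. Unset Printing Implicit Defensive.
Import GRing.Theory.
Local Open Scope ring_scope.

(*  Polynomial coefficients live in T3 = K[del][lam][mu] (inner variable =    *)
(*  del = the operator d of H = K[d], middle = lambda, outer = mu).           *)
(*  An element of K[d,lam,mu] (x) V (this contains P = H (x) V, P[lam],       *)
(*  P[lam,mu]) is represented by a formal finite sum  sum_j f_j (x) v_j,      *)
(*  i.e. a  seq (T3 * V); two such sums are equal as tensors iff all their    *)
(*  coefficient vectors  tcoef s a b c  (coefficient of d^a lam^b mu^c) agree. *)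
(*  Elements of P = H (x) V are  seq ({poly K} * V), embedded by [emb].       *)

Section PCA.
Variable K : fieldType.
Variable V : lmodType K.

Definition T3 := {poly {poly {poly K}}}.
Definition vdel : T3 := ('X%:P)%:P.
Definition vlam : T3 := ('X)%:P.
Definition vmu : T3 := 'X.

Definition subst3 (f : T3) (ed el em : T3) : T3 :=
  \sum_(c < size f) \sum_(b < size f`_c) \sum_(a < size f`_c`_b)
     ((f`_c`_b`_a)%:P%:P%:P * em ^+ c * el ^+ b * ed ^+ a).

Definition tens := seq (T3 * V).

Definition tcoef (s : tens) (a b c : nat) : V :=
  \sum_(p <- s) ((p.1)`_c`_b`_a *: p.2).

Definition teq (s t : tens) : Prop := forall a b c, tcoef s a b c = tcoef t a b c.

Definition tadd (s t : tens) : tens := s ++ t.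
Definition topp (s : tens) : tens := [seq (- p.1, p.2) | p <- s].
Definition tscale (k : K) (s : tens) : tens := [seq (p.1, k *: p.2) | p <- s].
Definition tmul (g : T3) (s : tens) : tens := [seq (g * p.1, p.2) | p <- s].
Definition tsubst (s : tens) (ed el em : T3) : tens :=
  [seq (subst3 p.1 ed el em, p.2) | p <- s].
Definition tdel (s : tens) : tens := tmul vdel s.

Definition Pelt := seq ({poly K} * V).
Definition emb (x : Pelt) : tens := [seq ((p.1)%:P%:P, p.2) | p <- x].

(* Extension by sesquilinearity (and K-bilinearity, treating the other      *)
(* formal variables as scalars) of a lambda-product given on V by [base]:   *)
(*  (f(d) a _L g(d) b) = f(-L) g(L+d) (a _L b),  L the spectral parameter.   *)
Definition lprod (base : T3 -> V -> V -> tens) (L : T3) (s t : tens) : tens :=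
  flatten [seq flatten [seq tmul (subst3 p.1 (- L) vlam vmu *
                                  subst3 q.1 (L + vdel) vlam vmu)
                                 (base L p.2 q.2) | q <- t] | p <- s].

(* (x_{-d-lam} y) : substitute lam := -d-lam in (x_lam y) *)
Definition lprod_skew (pr : T3 -> tens -> tens -> tens) (s t : tens) : tens :=
  tsubst (pr vlam s t) vdel (- vdel - vlam) vmu.

Definition cbase (mul : V -> V -> V) (L : T3) (a b : V) : tens := [:: (1, mul a b)].
Definition bbase (mul br : V -> V -> V) (D : V -> V) (L : T3) (a b : V) : tens :=
  [:: (1, br a b); (vdel, mul b (D a)); (L, D (mul a b))].

Definition bilinear_op (m : V -> V -> V) : Prop :=
  (forall (k : K) x y z, m (k *: x + y) z = k *: m x z + m y z) /\
  (forall (k : K) x y z, m x (k *: y + z) = k *: m x y + m x z).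

Definition poisson_algebra (mul br : V -> V -> V) : Prop :=
  bilinear_op mul /\ bilinear_op br /\
  (forall x y z, mul x (mul y z) = mul (mul x y) z) /\
  (forall x y, mul x y = mul y x) /\
  (forall x y, br x y = - br y x) /\
  (forall x y z, br x (br y z) = br (br x y) z + br y (br x z)) /\
  (forall x y z, br x (mul y z) = mul (br x y) z + mul y (br x z)).

Definition poisson_derivation (mul br : V -> V -> V) (D : V -> V) : Prop :=
  [/\ (forall (k : K) x y, D (k *: x + y) = k *: D x + D y),
      (forall x y, D (mul x y) = mul (D x) y + mul x (D y))
    & (forall x y, D (br x y) = br (D x) y + br x (D y))].

Definition is_lambda_product (pr : T3 -> tens -> tens -> tens) : Prop :=
  [/\ (forall (k : K) (x y z : Pelt),
         teq (pr vlam (tadd (tscale k (emb x)) (emb y)) (emb z))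
             (tadd (tscale k (pr vlam (emb x) (emb z))) (pr vlam (emb y) (emb z)))),
      (forall (k : K) (x y z : Pelt),
         teq (pr vlam (emb x) (tadd (tscale k (emb y)) (emb z)))
             (tadd (tscale k (pr vlam (emb x) (emb y))) (pr vlam (emb x) (emb z)))),
      (forall x y : Pelt,
         teq (pr vlam (tdel (emb x)) (emb y)) (tmul (- vlam) (pr vlam (emb x) (emb y))))
    & (forall x y : Pelt,
         teq (pr vlam (emb x) (tdel (emb y)))
             (tmul (vdel + vlam) (pr vlam (emb x) (emb y))))].

Definition poisson_conformal (cp bp : T3 -> tens -> tens -> tens) : Prop :=
  is_lambda_product cp /\ is_lambda_product bp /\
      (forall x y z : Pelt,
         teq (cp vlam (emb x) (cp vmu (emb y) (emb z)))
             (cp (vlam + vmu) (cp vlam (emb x) (emb y)) (emb z))) /\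
      (forall x y : Pelt,
         teq (cp vlam (emb x) (emb y)) (lprod_skew cp (emb y) (emb x))) /\
      (forall x y : Pelt,
         teq (bp vlam (emb x) (emb y)) (topp (lprod_skew bp (emb y) (emb x)))) /\
      (forall x y z : Pelt,
         teq (tadd (bp vlam (emb x) (bp vmu (emb y) (emb z)))
                   (topp (bp vmu (emb y) (bp vlam (emb x) (emb z)))))
             (bp (vlam + vmu) (bp vlam (emb x) (emb y)) (emb z))) /\
      (forall x y z : Pelt,
         teq (bp vlam (emb x) (cp vmu (emb y) (emb z)))
             (tadd (cp (vlam + vmu) (bp vlam (emb x) (emb y)) (emb z))
                   (cp vmu (emb y) (bp vlam (emb x) (emb z))))).

End PCA.

(* On
   P = K[d] (x) V the lambda-products (x _lam y) = xy and
   [x _lam y] = [x, y] + d (y D x) + lam D (x y), extended by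
   sesquilinearity, make P a Poisson conformal algebra.

   The proof proceeds as follows.
   - subst3, the substitution of the formal variables, is a ring morphism.
   - V embeds additively and multiplicatively into its unitization
     U = K (+) V, a commutative ring; realizing a formal sum as a polynomial in
     U[d][lam][mu] turns teq into equality of polynomials (teq_realizeP).
   - By sesquilinearity a product of formal sums is a double sum, and a nested
     product a triple sum, of contributions of generators f(d) (x) v
     (realize_lprod, realize_lprod_r/_l, realize_lprod_skew); on generators
     the coefficient substitutions evaluate to f(-lam), g(lam + d), ...
   - Each axiom of a Poisson conformal algebra thus reduces to an identity
     between generator contributions (associativity_gen, ..., leibniz_gen):
     after expanding brackets and derivations with the Poisson axioms it is an
     identity in a commutative ring, decided by [ring].
   - Summing these identities over generators gives the axioms, and the
     theorem. *)

From HB Require Import structures.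
From mathcomp Require Import all_boot all_order all_algebra.
From mathcomp Require Import ring.
Import GRing.Theory.
Local Open Scope ring_scope.
Set Implicit Arguments. Unset Strict Implicit. Unset Printing Implicit Defensive.

(* Simultaneous substitution d, lam, mu |-> ed, el, em in K[d, lam, mu]:
   subst3 is the ring morphism obtained by three nested Horner evaluations. *)
Section Substitution.
Variable K : fieldType.
Local Notation T1 := {poly K}.
Local Notation T2 := {poly {poly K}}.
Local Notation T3 := (T3 K).

Definition const3 : {rmorphism K -> T3} := (@polyC T2 \o (@polyC T1 \o @polyC K))%FUN.

Definition ev (f : {poly K}) (X : T3) : T3 := (map_poly const3 f).[X].

Lemma ev_congr f (X Y : T3) : X = Y -> ev f X = ev f Y.
Proof. by move->. Qed.

Lemma horner_morph_sum (R S : nzSemiRingType) (f : {rmorphism R -> S}) u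
    (cfu : commr_rmorph f u) p :
  horner_morph cfu p = \sum_(i < size p) f p`_i * u ^+ i.
Proof.
rewrite /horner_morph (horner_coef_wide _ (size_poly _ _)).
by apply: eq_bigr => i _; rewrite coef_map.
Qed.

Section Point.
Variables ed el em : T3.

Let comm_d : commr_rmorph const3 ed. Proof. by move=> x; rewrite /GRing.comm mulrC. Qed.
Let sub_d : {rmorphism T1 -> T3} := horner_morph comm_d.
Let comm_l : commr_rmorph sub_d el. Proof. by move=> x; rewrite /GRing.comm mulrC. Qed.
Let sub_dl : {rmorphism T2 -> T3} := horner_morph comm_l.
Let comm_m : commr_rmorph sub_dl em. Proof. by move=> x; rewrite /GRing.comm mulrC. Qed.
Let sub : {rmorphism T3 -> T3} := horner_morph comm_m.

Let subst3E f : subst3 f ed el em = sub f.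
Proof.
rewrite /subst3 /sub /= (horner_morph_sum comm_m); apply: eq_bigr => c _.
rewrite /sub_dl /= (horner_morph_sum comm_l) mulr_suml; apply: eq_bigr => b _.
rewrite /sub_d /= (horner_morph_sum comm_d) !mulr_suml; apply: eq_bigr => a _.
rewrite /=; ring.
Qed.

Ltac horner_simpl :=
  rewrite ?subst3E /sub /=; do ?[rewrite horner_morphC /=]; do ?[rewrite horner_morphX /=].

Lemma subst3M f g : subst3 (f * g) ed el em = subst3 f ed el em * subst3 g ed el em.
Proof. by rewrite !subst3E rmorphM. Qed.
Lemma subst3D f g : subst3 (f + g) ed el em = subst3 f ed el em + subst3 g ed el em.
Proof. by rewrite !subst3E rmorphD. Qed.
Lemma subst3N f : subst3 (- f) ed el em = - subst3 f ed el em.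
Proof. by rewrite !subst3E rmorphN. Qed.
Lemma subst3_1 : subst3 1 ed el em = 1.
Proof. by rewrite subst3E rmorph1. Qed.
Lemma subst3_del : subst3 (vdel K) ed el em = ed.
Proof. by horner_simpl. Qed.
Lemma subst3_lam : subst3 (vlam K) ed el em = el.
Proof. by horner_simpl. Qed.
Lemma subst3_mu : subst3 (vmu K) ed el em = em.
Proof. by horner_simpl. Qed.
Lemma subst3_dpoly (f : {poly K}) : subst3 f%:P%:P ed el em = ev f ed.
Proof. by horner_simpl. Qed.
Lemma subst3_ev f X : subst3 (ev f X) ed el em = ev f (subst3 X ed el em).
Proof.
rewrite !subst3E /ev -horner_map -map_poly_comp; congr (_.[_]).
by apply: eq_map_poly => c /=; horner_simpl.
Qed.
End Point.
End Substitution.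

Section LinearMaps.
Variables (K : fieldType) (V W : lmodType K) (f : V -> W).
Hypothesis f_linear : forall k x y, f (k *: x + y) = k *: f x + f y.

Lemma lin0 : f 0 = 0.
Proof. by apply: (@addrI _ (f 0)); rewrite -{1}(scale1r (f 0)) -f_linear scale1r !addr0. Qed.
Lemma linD x y : f (x + y) = f x + f y.
Proof. by rewrite -{1}(scale1r x) f_linear scale1r. Qed.
Lemma linZ k x : f (k *: x) = k *: f x.
Proof. by rewrite -[k *: x]addr0 f_linear lin0 addr0. Qed.
Lemma linN x : f (- x) = - f x.
Proof. by rewrite -scaleN1r linZ scaleN1r. Qed.
End LinearMaps.

Section BilinearOperations.
Variables (K : fieldType) (V : lmodType K) (m : V -> V -> V).
Hypothesis m_bilinear : bilinear_op m.
Let m_linear_l z k x y : m (k *: x + y) z = k *: m x z + m y z.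
Proof. exact: m_bilinear.1. Qed.
Let m_linear_r z k x y : m z (k *: x + y) = k *: m z x + m z y.
Proof. exact: m_bilinear.2. Qed.

Lemma bilinDl x y z : m (x + y) z = m x z + m y z.
Proof. exact: (linD (f := m^~ z) (m_linear_l z)). Qed.
Lemma bilinZl k x z : m (k *: x) z = k *: m x z.
Proof. exact: (linZ (f := m^~ z) (m_linear_l z)). Qed.
Lemma bilinNl x z : m (- x) z = - m x z.
Proof. exact: (linN (f := m^~ z) (m_linear_l z)). Qed.
Lemma bilin0l z : m 0 z = 0.
Proof. exact: (lin0 (f := m^~ z) (m_linear_l z)). Qed.
Lemma bilinDr x y z : m z (x + y) = m z x + m z y.
Proof. exact: (linD (f := m z) (m_linear_r z)). Qed.
Lemma bilinZr k x z : m z (k *: x) = k *: m z x.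
Proof. exact: (linZ (f := m z) (m_linear_r z)). Qed.
Lemma bilinNr x z : m z (- x) = - m z x.
Proof. exact: (linN (f := m z) (m_linear_r z)). Qed.
End BilinearOperations.

Definition commutative_algebra (K : fieldType) (V : lmodType K)
    (mul : V -> V -> V) : Prop :=
  [/\ bilinear_op mul, (forall x y z, mul x (mul y z) = mul (mul x y) z)
    & (forall x y, mul x y = mul y x)].

(* The unitization K (+) V of a commutative algebra (V, mul), with product
   (a, u) (b, v) = (a b, a v + b u + u v), is a commutative ring in which V
   embeds additively and multiplicatively; it lets [ring] decide identities
   between products in V. *)
Section Unitization.
Variables (K : fieldType) (V : lmodType K) (mul : V -> V -> V).
Hypothesis mulP : commutative_algebra mul.

Let mul_bilinear : bilinear_op mul. Proof. by case: mulP. Qed.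
Let mulA x y z : mul x (mul y z) = mul (mul x y) z. Proof. by case: mulP. Qed.
Let mulC x y : mul x y = mul y x. Proof. by case: mulP. Qed.
Let mulDl := bilinDl mul_bilinear.
Let mulDr := bilinDr mul_bilinear.
Let mulZl := bilinZl mul_bilinear.
Let mulZr := bilinZr mul_bilinear.
Let mul0l := bilin0l mul_bilinear.

(* The argument records the algebra structure, so that the ring structure
   is determined by the type. *)
Definition unitization of commutative_algebra mul := (K * V)%type.
Local Notation U := (unitization mulP).
HB.instance Definition _ := GRing.Zmodule.on U.

Definition unit_one : U := (1, 0).
Definition unit_mul (p q : U) : U := (p.1 * q.1, p.1 *: q.2 + q.1 *: p.2 + mul p.2 q.2).

Lemma unit_mulA : associative unit_mul.
Proof.
move=> [a u] [b v] [c w]; rewrite /unit_mul /=; congr pair; first by rewrite mulrA.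
rewrite !scalerDr !scalerA !mulDl !mulDr !mulZl !mulZr mulA.
rewrite (mulrC c a) (mulrC c b) !addrA -!addrA.
congr (_ + (_ + _)); rewrite addrCA; congr (_ + _).
by rewrite [RHS]addrCA; congr (_ + _); rewrite addrCA.
Qed.
Lemma unit_mulC : commutative unit_mul.
Proof. by move=> [a u] [b v]; rewrite /unit_mul /= mulrC mulC [X in X + _]addrC. Qed.
Lemma unit_mul1 : left_id unit_one unit_mul.
Proof. by move=> [a u]; rewrite /unit_mul /= mul1r scale1r scaler0 mul0l !addr0. Qed.
Lemma unit_mulDl : left_distributive unit_mul +%R.
Proof.
move=> [a u] [b v] [c w]; rewrite /unit_mul /=; congr pair; first by rewrite mulrDl.
rewrite scalerDl scalerDr mulDl !addrA -!addrA; congr (_ + _).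
rewrite addrCA; congr (_ + _); rewrite [RHS]addrCA; congr (_ + _); exact: addrCA.
Qed.
Lemma unit_one_neq0 : unit_one != 0.
Proof. by apply/eqP => [[]] /eqP; rewrite oner_eq0. Qed.
HB.instance Definition _ := GRing.Zmodule_isComNzRing.Build U
  unit_mulA unit_mulC unit_mul1 unit_mulDl unit_one_neq0.

Definition scalar_in (k : K) : U := (k, 0).
Lemma scalar_in_is_additive : zmod_morphism scalar_in.
Proof. by move=> k l; apply: injective_projections => //=; rewrite subrr. Qed.
HB.instance Definition _ := GRing.isZmodMorphism.Build K U scalar_in
  scalar_in_is_additive.
Lemma scalar_in_is_monoid_morphism : monoid_morphism scalar_in.
Proof.
split=> // k l; apply: injective_projections => //=.
by rewrite !scaler0 mul0l !addr0.
Qed.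
HB.instance Definition _ := GRing.isMonoidMorphism.Build K U scalar_in
  scalar_in_is_monoid_morphism.

Definition vector_in (v : V) : U := (0, v).
Lemma vector_in_is_additive : zmod_morphism vector_in.
Proof. by move=> u v; apply: injective_projections => //=; rewrite subrr. Qed.
HB.instance Definition _ := GRing.isZmodMorphism.Build V U vector_in
  vector_in_is_additive.

Lemma vector_in_inj : injective vector_in.
Proof. by move=> u v []. Qed.
Lemma vector_inM u v : vector_in (mul u v) = vector_in u * vector_in v.
Proof. by apply: injective_projections => /=; rewrite ?mulr0 ?scale0r ?add0r. Qed.
Lemma vector_inZ k v : vector_in (k *: v) = scalar_in k * vector_in v.
Proof.
by apply: injective_projections => /=; rewrite ?mulr0 ?scaler0 ?scale0r ?mul0l ?addr0 ?add0r.
Qed.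

Local Notation U3 := {poly {poly {poly U}}}.
Definition lift3 : {rmorphism T3 K -> U3} := map_poly (map_poly (map_poly scalar_in)).
Definition vconst (v : V) : U3 := (vector_in v)%:P%:P%:P.
Definition realize (s : tens V) : U3 := \sum_(p <- s) lift3 p.1 * vconst p.2.

Lemma vconstD u v : vconst (u + v) = vconst u + vconst v.
Proof. by rewrite /vconst !raddfD. Qed.
Lemma vconstN v : vconst (- v) = - vconst v.
Proof. by rewrite /vconst !raddfN. Qed.
Lemma vconstM u v : vconst (mul u v) = vconst u * vconst v.
Proof. by rewrite /vconst vector_inM !rmorphM. Qed.

Lemma realize_coef s a b c : (realize s)`_c`_b`_a = vector_in (tcoef s a b c).
Proof.
rewrite /realize /tcoef !coef_sum raddf_sum; apply: eq_bigr => p _.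
by rewrite !coefMC /= !coef_map /= vector_inZ.
Qed.

Lemma teq_realizeP s t : teq s t <-> realize s = realize t.
Proof.
split=> [eq_st | eq_st a b c]; last by apply: vector_in_inj; rewrite -!realize_coef eq_st.
apply/polyP => c; apply/polyP => b; apply/polyP => a.
by rewrite !realize_coef eq_st.
Qed.

Lemma realize_nil : realize [::] = 0.
Proof. exact: big_nil. Qed.
Lemma realize_cons (F : T3 K) (v : V) s : realize ((F, v) :: s) = lift3 F * vconst v + realize s.
Proof. exact: big_cons. Qed.
Lemma realize_unit_head v s : realize ((1, v) :: s) = vconst v + realize s.
Proof. by rewrite realize_cons rmorph1 mul1r. Qed.
Lemma realize_cat s t : realize (s ++ t) = realize s + realize t.
Proof. exact: big_cat. Qed.
Lemma realize_flatten (ss : seq (tens V)) : realize (flatten ss) = \sum_(s <- ss) realize s.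
Proof. exact: big_flatten. Qed.
Lemma realize_tmul C s : realize (tmul C s) = lift3 C * realize s.
Proof. by rewrite /realize big_map mulr_sumr; apply: eq_bigr => p _; rewrite rmorphM mulrA. Qed.
Lemma realize_tsubst_tmul C s ed el em :
  realize (tsubst (tmul C s) ed el em) = lift3 (subst3 C ed el em) * realize (tsubst s ed el em).
Proof.
rewrite /tsubst /tmul -map_comp /realize !big_map mulr_sumr.
by apply: eq_bigr => p _; rewrite /= subst3M rmorphM mulrA.
Qed.
Lemma realize_topp s : realize (topp s) = - realize s.
Proof. by rewrite /realize big_map -sumrN; apply: eq_bigr => p _; rewrite rmorphN mulNr. Qed.
Lemma realize_tscale k s : realize (tscale k s) = (scalar_in k)%:P%:P%:P * realize s.
Proof.
rewrite /realize big_map mulr_sumr; apply: eq_bigr => p _ /=.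
by rewrite /vconst vector_inZ !rmorphM mulrCA.
Qed.
End Unitization.

Notation U3 mulP := {poly {poly {poly unitization mulP}}}.

Section LambdaProducts.
Variables (K : fieldType) (V : lmodType K) (mul : V -> V -> V).
Hypothesis mulP : commutative_algebra mul.
Local Notation T3 := (T3 K).
Local Notation tens := (tens V).
Local Notation lam := (vlam K).
Local Notation mu := (vmu K).
Local Notation del := (vdel K).
Local Notation realize := (realize mulP).
Local Notation lift3 := (lift3 mulP).
Local Notation sub_l L F := (subst3 F (- L) lam mu).
Local Notation sub_r L F := (subst3 F (L + del) lam mu).
Local Notation gen f := (f%:P%:P : T3).
Implicit Types (base : T3 -> V -> V -> tens) (s t u : tens).

Definition pair_term base L (p q : T3 * V) : U3 mulP :=
  lift3 (sub_l L p.1 * sub_r L q.1) * realize (base L p.2 q.2).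

Lemma realize_lprod base L s t :
  realize (lprod base L s t) = \sum_(p <- s) \sum_(q <- t) pair_term base L p q.
Proof.
rewrite realize_flatten big_map; apply: eq_bigr => p _.
by rewrite realize_flatten big_map; apply: eq_bigr => q _; rewrite realize_tmul.
Qed.

Lemma big_lprod (R : nmodType) (F : T3 * V -> R) base L s t :
  \sum_(e <- lprod base L s t) F e = \sum_(p <- s) \sum_(q <- t)
     \sum_(e <- base L p.2 q.2) F (sub_l L p.1 * sub_r L q.1 * e.1, e.2).
Proof.
rewrite big_flatten big_map; apply: eq_bigr => p _.
by rewrite big_flatten big_map; apply: eq_bigr => q _; rewrite big_map.
Qed.

Definition triple_r base1 base2 L M (p q r : T3 * V) : U3 mulP :=
  \sum_(e <- base2 M q.2 r.2) pair_term base1 L p (sub_l M q.1 * sub_r M r.1 * e.1, e.2).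
Definition triple_l base1 base2 L M (p q r : T3 * V) : U3 mulP :=
  \sum_(e <- base2 M p.2 q.2) pair_term base1 L (sub_l M p.1 * sub_r M q.1 * e.1, e.2) r.

Lemma realize_lprod_r base1 base2 L M s t u :
  realize (lprod base1 L s (lprod base2 M t u)) =
  \sum_(p <- s) \sum_(q <- t) \sum_(r <- u) triple_r base1 base2 L M p q r.
Proof. by rewrite realize_lprod; apply: eq_bigr => p _; rewrite big_lprod. Qed.

Lemma realize_lprod_l base1 base2 L M s t u :
  realize (lprod base1 L (lprod base2 M s t) u) =
  \sum_(p <- s) \sum_(q <- t) \sum_(r <- u) triple_l base1 base2 L M p q r.
Proof.
rewrite realize_lprod big_lprod; apply: eq_bigr => p _; apply: eq_bigr => q _.
exact: exchange_big.
Qed.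

Definition skew_term base (p q : T3 * V) : U3 mulP :=
  realize (tsubst (tmul (sub_l lam p.1 * sub_r lam q.1) (base lam p.2 q.2))
                  del (- del - lam) mu).

Lemma realize_lprod_skew base s t :
  realize (lprod_skew (lprod base) s t) = \sum_(p <- s) \sum_(q <- t) skew_term base p q.
Proof.
rewrite /lprod_skew {1}/tsubst map_flatten realize_flatten !big_map.
by apply: eq_bigr => p _; rewrite map_flatten realize_flatten !big_map.
Qed.

Lemma lprod_is_lambda_product base :
  (forall L k a b, base L (k *: a) b = tscale k (base L a b)) ->
  (forall L k a b, base L a (k *: b) = tscale k (base L a b)) ->
  is_lambda_product (lprod base).
Proof.
move=> baseZl baseZr; split=> [k x y z | k x y z | x y | x y]; apply/(teq_realizeP mulP);
  rewrite /tadd ?realize_cat ?realize_tscale ?realize_tmul !realize_lprod.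
- rewrite big_cat /= mulr_sumr /tscale big_map; congr (_ + _).
  apply: eq_bigr => p _; rewrite mulr_sumr; apply: eq_bigr => q _.
  by rewrite /pair_term baseZl realize_tscale mulrCA.
- rewrite mulr_sumr -big_split; apply: eq_bigr => p _ /=.
  rewrite big_cat /= mulr_sumr /tscale big_map; congr (_ + _).
  by apply: eq_bigr => q _; rewrite /pair_term baseZr realize_tscale mulrCA.
- rewrite /tdel /tmul big_map mulr_sumr; apply: eq_bigr => p _.
  rewrite mulr_sumr; apply: eq_bigr => q _.
  by rewrite /pair_term /= subst3M subst3_del; ring.
- rewrite /tdel /tmul mulr_sumr; apply: eq_bigr => p _.
  rewrite big_map mulr_sumr; apply: eq_bigr => q _.
  by rewrite /pair_term /= subst3M subst3_del; ring.
Qed.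

Lemma pair_term_gen base L f g x y :
  pair_term base L (gen f, x) (gen g, y) =
  lift3 (ev f (- L) * ev g (L + del)) * realize (base L x y).
Proof. by rewrite /pair_term !subst3_dpoly. Qed.

Lemma skew_term_gen base f g x y :
  skew_term base (gen f, x) (gen g, y) =
  lift3 (ev f (- (- del - lam)) * ev g (- del - lam + del)) *
  realize (tsubst (base lam x y) del (- del - lam) mu).
Proof.
rewrite /skew_term realize_tsubst_tmul subst3M !subst3_dpoly !subst3_ev.
by rewrite subst3N subst3D subst3_lam subst3_del.
Qed.

(* In nested products the inner spectral parameter M must be unaffected by
   the outer substitution; this holds for M in {lam, mu, lam + mu}. *)
Lemma triple_r_gen base1 base2 L M f g h x y z :
  subst3 M (L + del) lam mu = M ->
  triple_r base1 base2 L M (gen f, x) (gen g, y) (gen h, z) =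
  lift3 (ev f (- L) * ev g (- M) * ev h (M + (L + del))) *
  \sum_(e <- base2 M y z) lift3 (sub_r L e.1) * realize (base1 L x e.2).
Proof.
move=> fixM; rewrite /triple_r mulr_sumr; apply: eq_bigr => e _.
rewrite /pair_term !subst3M !subst3_dpoly !subst3_ev subst3N subst3D fixM subst3_del.
by rewrite !rmorphM !mulrA.
Qed.

Lemma triple_l_gen base1 base2 L M f g h x y z :
  subst3 M (- L) lam mu = M ->
  triple_l base1 base2 L M (gen f, x) (gen g, y) (gen h, z) =
  lift3 (ev f (- M) * ev g (M + - L) * ev h (L + del)) *
  \sum_(e <- base2 M x y) lift3 (sub_l L e.1) * realize (base1 L e.2 z).
Proof.
move=> fixM; rewrite /triple_l mulr_sumr; apply: eq_bigr => e _.
rewrite /pair_term !subst3M !subst3_dpoly !subst3_ev subst3N subst3D fixM subst3_del.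
by rewrite !rmorphM; ring.
Qed.
End LambdaProducts.

Section BaseRules.
Variables (K : fieldType) (V : lmodType K) (mul br : V -> V -> V) (D : V -> V).
Hypothesis mulP : commutative_algebra mul.
Local Notation lam := (vlam K).
Local Notation mu := (vmu K).
Local Notation del := (vdel K).
Local Notation realize := (realize mulP).
Local Notation lift3 := (lift3 mulP).
Local Notation vconst := (vconst mulP).
Local Notation cb := (cbase mul).
Local Notation bb := (bbase mul br D).

Lemma realize_cbase L a b : realize (cb L a b) = vconst (mul a b).
Proof. by rewrite realize_unit_head realize_nil addr0. Qed.
Lemma realize_bbase L a b : realize (bb L a b) =
  vconst (br a b) + lift3 del * vconst (mul b (D a)) + lift3 L * vconst (D (mul a b)).
Proof. by rewrite realize_unit_head !realize_cons realize_nil addr0 addrA. Qed.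

Lemma realize_tsubst_cbase L a b ed el em :
  realize (tsubst (cb L a b) ed el em) = vconst (mul a b).
Proof. by rewrite /tsubst /= subst3_1 realize_unit_head realize_nil addr0. Qed.
Lemma realize_tsubst_bbase L a b ed el em : realize (tsubst (bb L a b) ed el em) =
  vconst (br a b) + lift3 ed * vconst (mul b (D a)) +
  lift3 (subst3 L ed el em) * vconst (D (mul a b)).
Proof.
rewrite /tsubst /= subst3_1 subst3_del realize_unit_head !realize_cons realize_nil.
by rewrite addr0 addrA.
Qed.

Lemma sum_cbase (G : T3 K * V -> U3 mulP) M a b ed :
  \sum_(e <- cb M a b) lift3 (subst3 e.1 ed lam mu) * G e = G (1, mul a b).
Proof. by rewrite big_cons big_nil addr0 subst3_1 rmorph1 mul1r. Qed.
Lemma sum_bbase (G : T3 K * V -> U3 mulP) M a b ed : subst3 M ed lam mu = M ->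
  \sum_(e <- bb M a b) lift3 (subst3 e.1 ed lam mu) * G e =
  G (1, br a b) + lift3 ed * G (del, mul b (D a)) + lift3 M * G (M, D (mul a b)).
Proof.
move=> fixM; rewrite !big_cons big_nil addr0 addrA /= fixM subst3_1 subst3_del.
by rewrite rmorph1 mul1r.
Qed.
End BaseRules.

Section PoissonAlgebra.
Variables (K : fieldType) (V : lmodType K) (mul br : V -> V -> V) (D : V -> V).
Hypotheses (HP : poisson_algebra mul br) (HD : poisson_derivation mul br D).

Lemma poisson_commutative_algebra : commutative_algebra mul.
Proof. by case: HP => mul_bil [_ [mulA [mulC _]]]. Qed.

Let br_bilinear : bilinear_op br. Proof. by case: HP => _ []. Qed.
Let D_linear k x y : D (k *: x + y) = k *: D x + D y. Proof. by case: HD. Qed.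

Lemma brDl x y z : br (x + y) z = br x z + br y z. Proof. exact: (bilinDl br_bilinear). Qed.
Lemma brDr x y z : br z (x + y) = br z x + br z y. Proof. exact: (bilinDr br_bilinear). Qed.
Lemma brNl x z : br (- x) z = - br x z. Proof. exact: (bilinNl br_bilinear). Qed.
Lemma brNr x z : br z (- x) = - br z x. Proof. exact: (bilinNr br_bilinear). Qed.
Lemma brZl k x z : br (k *: x) z = k *: br x z. Proof. exact: (bilinZl br_bilinear). Qed.
Lemma brZr k x z : br z (k *: x) = k *: br z x. Proof. exact: (bilinZr br_bilinear). Qed.
Lemma derD x y : D (x + y) = D x + D y. Proof. exact: (linD (f := D) D_linear). Qed.
Lemma derN x : D (- x) = - D x. Proof. exact: (linN (f := D) D_linear). Qed.
Lemma derZ k x : D (k *: x) = k *: D x. Proof. exact: (linZ (f := D) D_linear). Qed.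

Lemma br_skew x y : br x y = - br y x.
Proof. by case: HP => _ [_ [_ [_ []]]]. Qed.
Lemma br_jacobi x y z : br x (br y z) = br (br x y) z + br y (br x z).
Proof. by case: HP => _ [_ [_ [_ [_ []]]]]. Qed.
Lemma br_leibniz_r x y z : br x (mul y z) = mul (br x y) z + mul y (br x z).
Proof. by case: HP => _ [_ [_ [_ [_ [_ ]]]]]. Qed.
Lemma br_leibniz_l x y z : br (mul x y) z = - (mul (br z x) y + mul x (br z y)).
Proof. by rewrite br_skew br_leibniz_r. Qed.
Lemma der_mul x y : D (mul x y) = mul (D x) y + mul x (D y). Proof. by case: HD. Qed.
Lemma der_br x y : D (br x y) = br (D x) y + br x (D y). Proof. by case: HD. Qed.
End PoissonAlgebra.

Section Generators.
Variables (K : fieldType) (V : lmodType K) (mul br : V -> V -> V) (D : V -> V).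
Hypotheses (HP : poisson_algebra mul br) (HD : poisson_derivation mul br D).
Let mulP := poisson_commutative_algebra HP.
Local Notation lam := (vlam K).
Local Notation mu := (vmu K).
Local Notation del := (vdel K).
Local Notation lift3 := (lift3 mulP).
Local Notation vconst := (vconst mulP).
Local Notation cb := (cbase mul).
Local Notation bb := (bbase mul br D).
Local Notation gen f := (f%:P%:P : T3 K).

(* Make equal but syntactically different evaluation points agree. *)
Ltac ev_normalize := repeat match goal with
  | |- context [ev ?f ?X] => match goal with |- context [ev f ?Y] =>
      tryif constr_eq X Y then fail else (rewrite (@ev_congr _ f X Y); last by ring) end end.

(* Normal form of Poisson expressions in the generators x, y, z: brackets and
   derivations are pushed to atoms, and atomic brackets [u, v] are oriented
   by a fixed ranking of their arguments, using skew-symmetry. *)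
Ltac rank t x y z := lazymatch t with
  | x => constr:(0%N) | y => constr:(10%N) | z => constr:(20%N)
  | D ?u => let k := rank u x y z in constr:(k.+1)
  | _ => constr:(100%N) end.
Ltac orient_brackets x y z := repeat match goal with |- context [br ?u ?v] =>
  let ku := rank u x y z in let kv := rank v x y z in
  lazymatch eval compute in (kv < ku < 100)%N with
  | true => rewrite (br_skew HP u v) end end.

(* Atoms of the normal form: iterated derivatives of variables and their
   (nested) oriented brackets. *)
Ltac is_vatom t x y z := lazymatch t with
  | D ?u => is_vatom u x y z
  | br ?u ?v => is_vatom u x y z; is_vatom v x y z;
      let ku := rank u x y z in let kv := rank v x y z in
      lazymatch eval compute in (kv < ku < 100)%N with false => idtac end
  | _ => is_var t end.

(* Rewrite each realized constant vconst E into a ring expression in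
   realized atoms; the normal form of E is computed in a separate small goal. *)
Ltac expand_vconst x y z := repeat match goal with |- context [vconst ?E] =>
  tryif is_vatom E x y z then fail else
    let e := fresh "e" in
    eassert (e : vconst E = _);
    [ rewrite ?(der_mul HD, der_br HD, derD HD, derN HD, br_leibniz_r HP, br_leibniz_l HP,
                brDl HP, brDr HP, brNl HP, brNr HP);
      orient_brackets x y z; rewrite ?(vconstD, vconstN, vconstM); reflexivity
    | rewrite e; clear e ] end.

(* Decide an identity between realized generator contributions: normalize the
   evaluation points and the Poisson expressions, then, V being embedded in
   the commutative ring U, conclude by ring arithmetic with the realization
   maps abstracted. *)
Ltac poisson_ring x y z :=
  ev_normalize; expand_vconst x y z; move: (lift3) (vconst) => l c; ring.

Lemma associativity_gen (f g h : {poly K}) (x y z : V) :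
  triple_r mulP cb cb lam mu (gen f, x) (gen g, y) (gen h, z) =
  triple_l mulP cb cb (lam + mu) lam (gen f, x) (gen g, y) (gen h, z).
Proof.
rewrite triple_r_gen ?subst3_mu // triple_l_gen ?subst3_lam // !sum_cbase; cbn [fst snd].
by rewrite !realize_cbase; poisson_ring x y z.
Qed.

Lemma commutativity_gen (f g : {poly K}) (x y : V) :
  pair_term mulP cb lam (gen f, x) (gen g, y) = skew_term mulP cb (gen g, y) (gen f, x).
Proof.
rewrite pair_term_gen skew_term_gen realize_cbase realize_tsubst_cbase.
by poisson_ring x y y.
Qed.

Lemma skew_symmetry_gen (f g : {poly K}) (x y : V) :
  pair_term mulP bb lam (gen f, x) (gen g, y) = - skew_term mulP bb (gen g, y) (gen f, x).
Proof.
rewrite pair_term_gen skew_term_gen realize_bbase realize_tsubst_bbase subst3_lam.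
by poisson_ring x y y.
Qed.

Lemma jacobi_gen (f g h : {poly K}) (x y z : V) :
  triple_r mulP bb bb lam mu (gen f, x) (gen g, y) (gen h, z) -
  triple_r mulP bb bb mu lam (gen g, y) (gen f, x) (gen h, z) =
  triple_l mulP bb bb (lam + mu) lam (gen f, x) (gen g, y) (gen h, z).
Proof.
rewrite triple_r_gen ?subst3_mu // triple_r_gen ?subst3_lam // triple_l_gen ?subst3_lam //.
rewrite !sum_bbase ?subst3_lam ?subst3_mu //; cbn [fst snd].
by rewrite !realize_bbase (br_jacobi HP x y z); poisson_ring x y z.
Qed.

Lemma leibniz_gen (f g h : {poly K}) (x y z : V) :
  triple_r mulP bb cb lam mu (gen f, x) (gen g, y) (gen h, z) =
  triple_l mulP cb bb (lam + mu) lam (gen f, x) (gen g, y) (gen h, z) +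
  triple_r mulP cb bb mu lam (gen g, y) (gen f, x) (gen h, z).
Proof.
rewrite triple_r_gen ?subst3_mu // triple_r_gen ?subst3_lam // triple_l_gen ?subst3_lam //.
rewrite sum_cbase !sum_bbase ?subst3_lam //; cbn [fst snd].
by rewrite !realize_bbase !realize_cbase; poisson_ring x y z.
Qed.
End Generators.

Section GeneratorSums.
Variables (K : fieldType) (V : lmodType K) (R : zmodType).
Local Notation gen f := (f%:P%:P : T3 K).
Local Notation emb := (@emb K V).

Lemma eq_big_emb2 (F G : T3 K * V -> T3 K * V -> R) (x y : Pelt V) :
  (forall f g a b, F (gen f, a) (gen g, b) = G (gen f, a) (gen g, b)) ->
  \sum_(p <- emb x) \sum_(q <- emb y) F p q = \sum_(p <- emb x) \sum_(q <- emb y) G p q.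
Proof.
move=> eqFG; rewrite !big_map; apply: eq_bigr => p _.
by rewrite !big_map; apply: eq_bigr => q _; apply: eqFG.
Qed.

Lemma eq_big_emb3 (F G : T3 K * V -> T3 K * V -> T3 K * V -> R) (x y z : Pelt V) :
  (forall f g h a b c,
     F (gen f, a) (gen g, b) (gen h, c) = G (gen f, a) (gen g, b) (gen h, c)) ->
  \sum_(p <- emb x) \sum_(q <- emb y) \sum_(r <- emb z) F p q r =
  \sum_(p <- emb x) \sum_(q <- emb y) \sum_(r <- emb z) G p q r.
Proof.
move=> eqFG; rewrite !big_map; apply: eq_bigr => p _; rewrite !big_map.
by apply: eq_bigr => q _; rewrite !big_map; apply: eq_bigr => r _; apply: eqFG.
Qed.

Lemma sum3_split (I : Type) (s t u : seq I) (F G : I -> I -> I -> R) :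
  \sum_(i <- s) \sum_(j <- t) \sum_(l <- u) F i j l +
  \sum_(i <- s) \sum_(j <- t) \sum_(l <- u) G i j l =
  \sum_(i <- s) \sum_(j <- t) \sum_(l <- u) (F i j l + G i j l).
Proof.
rewrite -big_split; apply: eq_bigr => i _; rewrite -big_split.
by apply: eq_bigr => j _; rewrite -big_split.
Qed.

Lemma sum3_opp (I : Type) (s t u : seq I) (F : I -> I -> I -> R) :
  - \sum_(i <- s) \sum_(j <- t) \sum_(l <- u) F i j l =
  \sum_(i <- s) \sum_(j <- t) \sum_(l <- u) - F i j l.
Proof.
rewrite -sumrN; apply: eq_bigr => i _; rewrite -sumrN.
by apply: eq_bigr => j _; rewrite -sumrN.
Qed.
End GeneratorSums.

Section PoissonConformal.
Variables (K : fieldType) (V : lmodType K) (mul br : V -> V -> V) (D : V -> V).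
Hypotheses (HP : poisson_algebra mul br) (HD : poisson_derivation mul br D).
Let mulP := poisson_commutative_algebra HP.
Let mul_bilinear : bilinear_op mul. Proof. by case: mulP. Qed.
Local Notation lam := (vlam K).
Local Notation mu := (vmu K).
Local Notation cb := (cbase mul).
Local Notation bb := (bbase mul br D).
Local Notation cp := (lprod cb).
Local Notation bp := (lprod bb).
Local Notation emb := (@emb K V).

Lemma cbase_lambda_product : is_lambda_product cp.
Proof.
by apply: (lprod_is_lambda_product mulP) => L k a b;
  rewrite /cbase /tscale /= ?(bilinZl mul_bilinear) ?(bilinZr mul_bilinear).
Qed.

Lemma bbase_lambda_product : is_lambda_product bp.
Proof.
apply: (lprod_is_lambda_product mulP) => L k a b; rewrite /bbase /tscale /=.
- by rewrite (brZl HP) (derZ HD) (bilinZr mul_bilinear) (bilinZl mul_bilinear) (derZ HD).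
- by rewrite (brZr HP) (bilinZl mul_bilinear) (bilinZr mul_bilinear) (derZ HD).
Qed.

Lemma cp_associative (x y z : Pelt V) :
  teq (cp lam (emb x) (cp mu (emb y) (emb z))) (cp (lam + mu) (cp lam (emb x) (emb y)) (emb z)).
Proof.
apply/(teq_realizeP mulP); rewrite realize_lprod_r realize_lprod_l.
by apply: eq_big_emb3 => f g h a b c; apply: associativity_gen.
Qed.

Lemma cp_commutative (x y : Pelt V) : teq (cp lam (emb x) (emb y)) (lprod_skew cp (emb y) (emb x)).
Proof.
apply/(teq_realizeP mulP); rewrite realize_lprod realize_lprod_skew [RHS]exchange_big.
by apply: eq_big_emb2 => f g a b; apply: commutativity_gen.
Qed.

Lemma bp_skew_symmetric (x y : Pelt V) :
  teq (bp lam (emb x) (emb y)) (topp (lprod_skew bp (emb y) (emb x))).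
Proof.
apply/(teq_realizeP mulP); rewrite realize_topp realize_lprod realize_lprod_skew.
rewrite exchange_big -sumrN; under [RHS]eq_bigr => p _ do rewrite -sumrN.
by apply: eq_big_emb2 => f g a b; apply: skew_symmetry_gen.
Qed.

Lemma bp_jacobi (x y z : Pelt V) :
  teq (tadd (bp lam (emb x) (bp mu (emb y) (emb z)))
            (topp (bp mu (emb y) (bp lam (emb x) (emb z)))))
      (bp (lam + mu) (bp lam (emb x) (emb y)) (emb z)).
Proof.
apply/(teq_realizeP mulP); rewrite realize_cat realize_topp !realize_lprod_r realize_lprod_l.
rewrite [X in _ - X]exchange_big sum3_opp sum3_split.
by apply: eq_big_emb3 => f g h a b c; apply: jacobi_gen.
Qed.

Lemma conformal_leibniz (x y z : Pelt V) :
  teq (bp lam (emb x) (cp mu (emb y) (emb z)))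
      (tadd (cp (lam + mu) (bp lam (emb x) (emb y)) (emb z))
            (cp mu (emb y) (bp lam (emb x) (emb z)))).
Proof.
apply/(teq_realizeP mulP); rewrite realize_cat !realize_lprod_r realize_lprod_l.
rewrite [X in _ = _ + X]exchange_big sum3_split.
by apply: eq_big_emb3 => f g h a b c; apply: leibniz_gen.
Qed.
End PoissonConformal.

Theorem mainTheorem3 (K : fieldType) (V : lmodType K)
    (mul br : V -> V -> V) (D : V -> V) :
  [pchar K] =i pred0 ->
  poisson_algebra mul br ->
  poisson_derivation mul br D ->
  poisson_conformal (lprod (cbase mul)) (lprod (bbase mul br D)).
Proof.
move=> _ HP HD; split; first exact: cbase_lambda_product HP.
split; first exact: bbase_lambda_product HP HD.
split; first exact: cp_associative HP.
split; first exact: cp_commutative HP.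
split; first exact: bp_skew_symmetric HP HD.
split; first exact: bp_jacobi HP HD.
exact: conformal_leibniz HP HD.
Qed.
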